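(* Let $V$ be a finite-dimensional irreducible $T$-module. Then (i) there exist nonnegative integers $r,\delta$ with $r+\delta\le d$ such that for $0\le i\le d$, $e^*_iV\ne0$ if and only if $r\le i\le r+\delta$; (ii) there exist nonnegative integers $t,\delta^*$ with $t+\delta^*\le d$ such that for $0\le i\le d$, $e_iV\ne0$ if and only if $t\le i\le t+\delta^*$.
   Context: $\mathbb{F}$ is a field, $d\ge0$, and $\{\theta_i\}_{i=0}^d$, $\{\theta^*_i\}_{i=0}^d$ are scalars in $\mathbb{F}$ with $\theta_i\ne\theta_j$, $\theta^*_i\ne\theta^*_j$ for $i\ne j$, such that $\frac{\theta_{i-2}-\theta_{i+1}}{\theta_{i-1}-\theta_i}$ and $\frac{\theta^*_{i-2}-\theta^*_{i+1}}{\theta^*_{i-1}-\theta^*_i}$ are equal and independent of $i$ for $2\le i\le d-1$. $T$ is the associative $\mathbb{F}$-algebra with $1$ generated by $a,e_0,\dots,e_d,a^*,e^*_0,\dots,e^*_d$ with relations $e_ie_j=\delta_{ij}e_i$, $e^*_ie^*_j=\delta_{ij}e^*_i$, $\sum_ie_i=\sum_ie^*_i=1$, $a=\sum_i\theta_ie_i$, $a^*=\sum_i\theta^*_ie^*_i$, and $e^*_ia^ke^*_j=0$, $e_i{a^*}^ke_j=0$ whenever $0\le i,j,k\le d$ and $k<|i-j|$. *)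

From HB Require Import structures.
From mathcomp Require Import all_boot all_order all_algebra.
Set Implicit Arguments.
Unset Strict Implicit.
Unset Printing Implicit Defensive.
Import Order.TTheory GRing.Theory Num.Theory.
Local Open Scope ring_scope.

Section TModule.
Variables (F : fieldType) (vT : vectType F).

Definition epow (A : 'End(vT)) (k : nat) : 'End(vT) :=
  iter k (fun g => (A \o g)%VF) \1%VF.

Definition invariant (U : {vspace vT}) (f : 'End(vT)) : bool :=
  (f @: U <= U)%VS.

(* The action of the generators a, e_0..e_d, a*, e*_0..e*_d of T on V
   (algebra product xy acts as composition x \o y) satisfies the
   defining relations of T. *)
Definition T_relations (d : nat) (theta thetas : nat -> F)
  (A : 'End(vT)) (E : nat -> 'End(vT))
  (As : 'End(vT)) (Es : nat -> 'End(vT)) : Prop :=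
  [/\ (forall i j, (i <= d)%N -> (j <= d)%N ->
         (E i \o E j)%VF = if i == j then E i else 0),
      (forall i j, (i <= d)%N -> (j <= d)%N ->
         (Es i \o Es j)%VF = if i == j then Es i else 0),
      \sum_(i < d.+1) E i = \1%VF /\ \sum_(i < d.+1) Es i = \1%VF,
      A = \sum_(i < d.+1) theta i *: E i /\
      As = \sum_(i < d.+1) thetas i *: Es i &
      (forall i j k, (i <= d)%N -> (j <= d)%N -> (k <= d)%N ->
         (k < `|(i : int) - (j : int)|)%N ->
         (Es i \o epow A k \o Es j)%VF = 0 /\
         (E i \o epow As k \o E j)%VF = 0)].

(* V is an irreducible T-module: V <> 0 and the only subspaces invariant
   under all generators (= the T-submodules) are 0 and V. *)
Definition T_irreducible (d : nat)
  (A : 'End(vT)) (E : nat -> 'End(vT))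
  (As : 'End(vT)) (Es : nat -> 'End(vT)) : Prop :=
  fullv != (0%VS : {vspace vT}) /\
  forall U : {vspace vT},
    invariant U A -> invariant U As ->
    (forall i, (i <= d)%N -> invariant U (E i) && invariant U (Es i)) ->
    U = 0%VS \/ U = fullv.

End TModule.

From Pilot Require Import Defs.
From HB Require Import structures.
From mathcomp Require Import all_boot all_order all_algebra.
From mathcomp Require Import zify.
Import Order.TTheory GRing.Theory Num.Theory.
Local Open Scope ring_scope.
Set Implicit Arguments.
Unset Strict Implicit.

(* Fix j with e*_j V = 0 and let W be the sum of the e*_l V for l < j.  W is
   stable under every e*_l, hence under a*; it is stable under a because
   e*_m a e*_l = 0 for |m - l| > 1 and a can only move e*_{j-1} V into
   e*_j V = 0; and since the theta_i are distinct each e_k is a polynomial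
   in a, so W is a T-submodule.  By irreducibility W = 0 or W = V, so the
   nonzero e*_i V cannot lie on both sides of j.  Swapping the starred and
   unstarred generators gives (ii). *)

Lemma limg_eq0 (F : fieldType) (vT : vectType F) (f : 'End(vT)) :
  ((f @: fullv)%VS == 0%VS) = (f == 0).
Proof.
apply/eqP/eqP => [f0|->]; last exact: lim0g.
apply/lfunP => u; rewrite zero_lfunE; apply/eqP.
by rewrite -memv0 -f0 memv_img ?memvf.
Qed.

(* [Defs.invariant] is qualified because eqtype's [invariant] shadows it. *)
Lemma invariantP (F : fieldType) (vT : vectType F) (U : {vspace vT})
    (f : 'End(vT)) :
  reflect {in U, forall x, f x \in U} (Defs.invariant U f).
Proof.
apply: (iffP subvP) => [fU x xU | fU _ /memv_imgP [x xU ->]]; last exact: fU.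
by apply: fU; apply: memv_img.
Qed.

Lemma epow1 (F : fieldType) (vT : vectType F) (f : 'End(vT)) : epow f 1 = f.
Proof. exact: comp_lfun1r. Qed.

Lemma interval_of_convex (P : pred nat) (d : nat) :
  (exists2 i, (i <= d)%N & P i) ->
  (forall i j k, (i < j)%N -> (j < k)%N -> (k <= d)%N -> P i -> P k -> P j) ->
  exists r delta : nat, (r + delta <= d)%N /\
    forall i, (i <= d)%N -> (P i <-> (r <= i <= r + delta)%N).
Proof.
move=> [i0 i0d Pi0] convexP.
pose Q i := (i <= d)%N && P i.
have exQ : exists i, Q i by exists i0; apply/andP.
have ubQ i : Q i -> (i <= d)%N by case/andP.
case: (ex_minnP exQ) => r /andP [rd Pr] minr.
case: (ex_maxnP exQ ubQ) => M /andP [Md PM] maxM.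
have rM : (r <= M)%N by apply: minr; apply/andP.
exists r, (M - r)%N; split=> [|i id]; first lia.
split=> [Pi | /andP [ri iM]].
  have Qi : Q i by apply/andP.
  by have := minr i Qi; have := maxM i Qi; lia.
case: (ltngtP r i) => [lt_ri|/ltac:(lia)|<-] //.
case: (ltngtP i M) => [lt_iM|/ltac:(lia)|->] //.
exact: convexP lt_ri lt_iM Md Pr PM.
Qed.

Lemma invariant_lin_comb (F : fieldType) (vT : vectType F) (U : {vspace vT})
    (d : nat) (c : nat -> F) (E : nat -> 'End(vT)) :
  (forall i, (i <= d)%N -> Defs.invariant U (E i)) ->
  Defs.invariant U (\sum_(i < d.+1) c i *: E i).
Proof.
move=> EU; apply/invariantP => x xU; rewrite sum_lfunE.
apply: memv_suml => i _; rewrite lfunE /= memvZ //.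
exact: (invariantP _ _ (EU i (ltn_ord i))).
Qed.

Section OrthogonalIdempotents.

Variables (F : fieldType) (vT : vectType F) (d : nat) (E : nat -> 'End(vT)).
Hypothesis orthE : forall i j, (i <= d)%N -> (j <= d)%N ->
  (E i \o E j)%VF = if i == j then E i else 0.
Hypothesis sumE : \sum_(i < d.+1) E i = \1%VF.

Lemma idem_decomp v : v = \sum_(i < d.+1) E i v.
Proof. by rewrite -sum_lfunE sumE id_lfunE. Qed.

Lemma idem_orth_apply i j v : (i <= d)%N -> (j <= d)%N ->
  E i (E j v) = if i == j then E j v else 0.
Proof.
by move=> id jd; rewrite -comp_lfunE orthE //; case: eqP => [->|_]; rewrite ?lfunE.
Qed.

Lemma exists_idem_neq0 : fullv != 0%VS :> {vspace vT} ->
  exists2 i, (i <= d)%N & E i != 0.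
Proof.
move=> V_neq0; have /existsP [i Ei] : [exists i : 'I_d.+1, E i != 0].
  apply: contraNT V_neq0 => /existsPn E0.
  by rewrite -(lim1g fullv) -sumE big1 ?lim0g // => i _; apply/eqP/negPn/E0.
by exists i; rewrite // -ltnS.
Qed.

Definition lower_span (j : nat) : {vspace vT} :=
  ((\sum_(l < d.+1 | (l < j)%N) E l) @: fullv)%VS.

Lemma mem_lower_span j x :
  reflect (forall m, (m <= d)%N -> (j <= m)%N -> E m x = 0)
          (x \in lower_span j).
Proof.
apply: (iffP memv_imgP) => [[y _ ->] m md jm | Ex0].
  rewrite sum_lfunE linear_sum big1 // => l lj.
  rewrite /= (idem_orth_apply _ md (ltn_ord l)).
  by case: eqP => // eml; move: lj; rewrite -eml; lia.
exists x; first exact: memvf.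
rewrite sum_lfunE {1}(idem_decomp x) [RHS]big_mkcond /=.
by apply: eq_bigr => l _; case: (ltnP l j) => // jl; apply: Ex0 (ltn_ord l) jl.
Qed.

Lemma lower_span_idem_stable j k : (k <= d)%N ->
  Defs.invariant (lower_span j) (E k).
Proof.
move=> kd; apply/invariantP => x /mem_lower_span Ex0.
apply/mem_lower_span => m md jm.
by rewrite idem_orth_apply //; case: eqP => [<-|]; [apply: Ex0 | ].
Qed.

Variable theta : nat -> F.
Hypothesis theta_inj : forall i j, (i <= d)%N -> (j <= d)%N -> i != j ->
  theta i != theta j.

Lemma idem_eigen i v : (i <= d)%N ->
  (\sum_(l < d.+1) theta l *: E l) (E i v) = theta i *: E i v.
Proof.
move=> id; rewrite sum_lfunE (bigD1 (inord i)) //= big1 ?addr0 => [|l li].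
  by rewrite lfunE /= idem_orth_apply ?inordK ?eqxx.
rewrite lfunE /= (idem_orth_apply _ (ltn_ord l) id); case: eqP => [eli|]; last first.
  by rewrite scaler0.
by case/eqP: li; apply: val_inj; rewrite /= inordK.
Qed.

(* Lagrange interpolation: prod_(k != j) (a - theta k) maps v to a nonzero
   multiple of E j v, with a the combination sum theta l *: E l. *)
Lemma invariant_idem_of_comb (U : {vspace vT}) j : (j <= d)%N ->
  Defs.invariant U (\sum_(l < d.+1) theta l *: E l) -> Defs.invariant U (E j).
Proof.
move=> jd /invariantP aU; apply/invariantP => v vU.
pose coef m i := \prod_(0 <= k < m | k != j) (theta i - theta k).
have coefU m : (m <= d.+1)%N -> \sum_(i < d.+1) coef m i *: E i v \in U.
  elim: m => [_|m IHm lt_md]; rewrite /coef.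
    by under eq_bigr do rewrite big_geq // scale1r; rewrite -idem_decomp.
  under eq_bigr do rewrite big_mkcond big_nat_recr //= -big_mkcond.
  case: eqP => [_|_]; first by under eq_bigr do rewrite mulr1; apply: IHm; lia.
  have := memvB (aU _ (IHm (ltnW lt_md))) (memvZ (theta m) (IHm (ltnW lt_md))).
  rewrite linear_sum scaler_sumr -sumrB; congr (_ \in U); apply: eq_bigr => i _.
  rewrite linearZ /= (idem_eigen v (ltn_ord i)) !scalerA -scalerBl.
  by rewrite mulrBr [theta m * _]mulrC.
have coef_j : coef d.+1 j != 0.
  rewrite prodf_seq_neq0; apply/allP => k; rewrite mem_iota add0n => /andP [_ kd].
  by apply/implyP => kj; rewrite subr_eq0 theta_inj // eq_sym.
have coef_i (i : 'I_d.+1) : val i != j -> coef d.+1 i = 0.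
  move=> ij; apply/eqP; rewrite prodf_seq_eq0; apply/hasP; exists (val i).
    by rewrite mem_iota add0n ltn_ord.
  by rewrite ij subrr eqxx.
have := coefU d.+1 (leqnn _); rewrite (bigD1 (inord j)) //= big1 => [|i ij].
  by rewrite inordK // addr0 => /(memvZ (coef d.+1 j)^-1); rewrite scalerK.
by rewrite coef_i ?scale0r //; apply: contra ij => /eqP <-; rewrite inord_val.
Qed.

End OrthogonalIdempotents.

Section IrreducibleTModule.

Variables (F : fieldType) (vT : vectType F) (d : nat) (theta thetas : nat -> F).
Hypothesis theta_inj : forall i j, (i <= d)%N -> (j <= d)%N -> i != j ->
  theta i != theta j.
Variables (A : 'End(vT)) (E : nat -> 'End(vT)) (As : 'End(vT)) (Es : nat -> 'End(vT)).
Hypothesis relT : T_relations d theta thetas A E As Es.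
Hypothesis irrT : T_irreducible d A E As Es.

Lemma Es_A_Es_eq0 l m x : (l <= d)%N -> (m <= d)%N -> (l.+1 < m)%N ->
  Es m (A (Es l x)) = 0.
Proof.
move=> ld md lm; case: relT => _ _ _ _ far.
have [EsAEs _] := far m l 1 md ld ltac:(lia) ltac:(rewrite distnEl; lia).
transitivity ((Es m \o epow A 1 \o Es l)%VF x); first by rewrite epow1 !comp_lfunE.
by rewrite EsAEs lfunE.
Qed.

Lemma lower_span_A_stable j : (j <= d)%N -> Es j = 0 ->
  Defs.invariant (lower_span d Es j) A.
Proof.
case: relT => _ orthEs [_ sumEs] _ _ jd Esj0.
apply/invariantP => x /(mem_lower_span orthEs sumEs) Ex0.
apply/(mem_lower_span orthEs sumEs) => m md jm.
rewrite (idem_decomp sumEs x) !linear_sum big1 // => l _ /=.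
case: (ltnP l j) => [lj|jl]; last by rewrite (Ex0 l (ltn_ord l) jl) !linear0.
have [<-|jm'] := eqVneq j m; first by rewrite Esj0 lfunE.
by apply: Es_A_Es_eq0 (ltn_ord l) md _; lia.
Qed.

Lemma Es_support_convex i j k : (i < j)%N -> (j < k)%N -> (k <= d)%N ->
  Es i != 0 -> Es k != 0 -> Es j != 0.
Proof.
case: relT => orthE orthEs [sumE sumEs] [defA defAs] _.
move=> ij jk kd /lfunPn [u Esu] /lfunPn [w Esw]; rewrite lfunE in Esu Esw.
apply: contraNneq Esw => Esj0.
have jd : (j <= d)%N by lia.
pose W := lower_span d Es j.
have WEs l : (l <= d)%N -> Defs.invariant W (Es l) by exact: lower_span_idem_stable.
have WA : Defs.invariant W A by exact: lower_span_A_stable.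
have WAs : Defs.invariant W As by rewrite defAs; exact: invariant_lin_comb.
have WE l : (l <= d)%N -> Defs.invariant W (E l).
  by move=> ld; apply: (invariant_idem_of_comb orthE sumE theta_inj ld); rewrite -defA.
have [W0|Wfull] := irrT.2 W WA WAs (fun l ld => introT andP (conj (WE l ld) (WEs l ld))).
  suff : Es i u \in W by rewrite W0 memv0 (negPf Esu).
  apply/(mem_lower_span orthEs sumEs) => m md jm.
  by rewrite (idem_orth_apply orthEs) //; case: (eqVneq m i) => //; lia.
have /(mem_lower_span orthEs sumEs) Ew0 : w \in W by rewrite Wfull memvf.
by rewrite Ew0 ?lfunE // ltnW.
Qed.

Lemma Es_support_interval :
  exists r delta : nat, (r + delta <= d)%N /\
    forall i, (i <= d)%N -> ((Es i @: fullv)%VS != 0%VS <-> (r <= i <= r + delta)%N).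
Proof.
case: relT irrT => _ _ [_ sumEs] _ _ [V_neq0 _].
have [r [delta [rd supp]]] := @interval_of_convex (fun i => Es i != 0) d
  (exists_idem_neq0 sumEs V_neq0) Es_support_convex.
exists r, delta; split=> // i id.
by rewrite limg_eq0; apply: supp.
Qed.

End IrreducibleTModule.

Lemma T_relations_swap (F : fieldType) (vT : vectType F) (d : nat)
    (theta thetas : nat -> F) (A : 'End(vT)) (E : nat -> 'End(vT))
    (As : 'End(vT)) (Es : nat -> 'End(vT)) :
  T_relations d theta thetas A E As Es -> T_relations d thetas theta As Es A E.
Proof.
case=> orthE orthEs [sumE sumEs] [defA defAs] far; split=> // i j k id jd kd ijk.
by have [] := far i j k id jd kd ijk.
Qed.

Lemma T_irreducible_swap (F : fieldType) (vT : vectType F) (d : nat)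
    (A : 'End(vT)) (E : nat -> 'End(vT)) (As : 'End(vT)) (Es : nat -> 'End(vT)) :
  T_irreducible d A E As Es -> T_irreducible d As Es A E.
Proof.
case=> V_neq0 irr; split=> // U UAs UA UEs; apply: irr => // i id.
by rewrite andbC; apply: UEs.
Qed.

Unset Implicit Arguments.
Set Strict Implicit.

Theorem lemma5p3 (F : fieldType) (d : nat) (theta thetas : nat -> F)
  (Htheta : forall i j, (i <= d)%N -> (j <= d)%N -> i != j -> theta i != theta j)
  (Hthetas : forall i j, (i <= d)%N -> (j <= d)%N -> i != j -> thetas i != thetas j)
  (Hrec : exists beta : F, forall i, (2 <= i)%N -> (i <= d.-1)%N ->
      (theta (i - 2)%N - theta i.+1) / (theta i.-1 - theta i) = beta /\
      (thetas (i - 2)%N - thetas i.+1) / (thetas i.-1 - thetas i) = beta)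
  (vT : vectType F) (A : 'End(vT)) (E : nat -> 'End(vT))
  (As : 'End(vT)) (Es : nat -> 'End(vT))
  (HT : T_relations d theta thetas A E As Es)
  (Hirr : T_irreducible d A E As Es) :
  (exists r delta : nat, (r + delta <= d)%N /\
     forall i, (i <= d)%N ->
       ((Es i @: fullv)%VS != 0%VS <-> (r <= i <= r + delta)%N)) /\
  (exists t deltas : nat, (t + deltas <= d)%N /\
     forall i, (i <= d)%N ->
       ((E i @: fullv)%VS != 0%VS <-> (t <= i <= t + deltas)%N)).
Proof.
split; first exact: (Es_support_interval Htheta HT Hirr).
exact: (Es_support_interval Hthetas (T_relations_swap HT) (T_irreducible_swap Hirr)).
Qed.
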